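(* Let $\beta,\gamma,\delta\in\mathbb{R}$ be nonzero and let $A=\begin{pmatrix}0&\beta\\\gamma&\delta\end{pmatrix}$ or $A=\begin{pmatrix}\delta&\gamma\\\beta&0\end{pmatrix}$. Then $A$ is a Karamardian matrix if and only if $\gamma<0$, $\beta>0$ and $\delta>0$.
   Context: For $M\in\mathbb{R}^{n\times n}$ let $K_M=\mathbb{R}^n_+\cap R(M)$ and $K_M^*=\{y: x^Ty\ge 0\ \forall x\in K_M\}$ (one has $K_M^*=\mathbb{R}^n_++N(M^T)$, with interior $\{a+b: a>0,\ b\in N(M^T)\}$); for invertible $M$, $K_M=K_M^*=\mathbb{R}^n_+$. For $q$, LCP$(M,K_M,q)$ is to find $x\in K_M$ with $Mx+q\in K_M^*$ and $x^T(Mx+q)=0$. $M$ is a Karamardian matrix if $K_M\ne\{0\}$ and there exists $d$ in the interior of $K_M^*$ such that both LCP$(M,K_M,0)$ and LCP$(M,K_M,d)$ have $x=0$ as their only solution. *)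

From mathcomp Require Import all_boot all_order all_algebra.
From mathcomp Require Import reals.
Set Implicit Arguments. Unset Strict Implicit. Unset Printing Implicit Defensive.
Import Order.TTheory GRing.Theory Num.Theory.
Local Open Scope ring_scope.

Section Karamardian.
Variable R : realType.
Variable n : nat.
Implicit Types (M : 'M[R]_n) (x y q : 'cV[R]_n).

Definition dotv x y : R := \sum_(i < n) x i 0 * y i 0.

Definition nonnegv x : Prop := forall i, 0 <= x i 0.

Definition KM M (x : 'cV[R]_n) : Prop := nonnegv x /\ exists z : 'cV[R]_n, x = M *m z.

Definition KMdual M (y : 'cV[R]_n) : Prop := forall x, KM M x -> 0 <= dotv x y.

(* topological interior in R^n (sup-norm balls; all norms on R^n are equivalent) *)
Definition interiorv (S : 'cV[R]_n -> Prop) (d : 'cV[R]_n) : Prop :=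
  exists2 eps : R, 0 < eps &
    forall z : 'cV[R]_n, (forall i, `|z i 0 - d i 0| < eps) -> S z.

Definition LCP_sol M q x : Prop :=
  KM M x /\ KMdual M (M *m x + q) /\ dotv x (M *m x + q) = 0.

Definition karamardian M : Prop :=
  (exists x, KM M x /\ x <> 0) /\
  exists d, interiorv (KMdual M) d /\
    (forall x, LCP_sol M 0 x -> x = 0) /\
    (forall x, LCP_sol M d x -> x = 0).

End Karamardian.

Definition mx2 (R : realType) (a b c e : R) : 'M[R]_2 :=
  \matrix_(i < 2, j < 2)
    if (i : nat) == 0%N then (if (j : nat) == 0%N then a else b)
    else (if (j : nat) == 0%N then c else e).

From mathcomp Require Import all_boot all_order all_algebra.
From mathcomp Require Import reals.
From mathcomp Require Import ring lra.
Import Order.TTheory GRing.Theory Num.Theory.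
Set Implicit Arguments. Unset Strict Implicit. Unset Printing Implicit Defensive.
Local Open Scope ring_scope.

(* Both matrices of the theorem are invertible (det = -beta gamma != 0).  For a
   matrix M of full range, K_M is the nonnegative orthant, so is its dual, and
   the interior of the dual is the open orthant; hence (for n > 0) M is
   Karamardian iff the classical LCP(M, q) has only the solution 0 for q = 0
   and for some q > 0.  This reduction is done first, for arbitrary n.

   The second matrix of the theorem is the first with both
   coordinates exchanged, so it suffices to treat [[0, beta], [gamma, delta]]:
   - if gamma < 0 < beta, delta, complementarity kills both coordinates of any
     solution, for q = 0 and for every q > 0;
   - conversely gamma > 0 lets (1, 0) solve the homogeneous LCP, and for q > 0
     a sign violation of beta or delta produces a nonzero solution, either
     on the ray t = 0 or with both slacks vanishing. *)

Section Orthant.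
Variables (R : realType) (n : nat).
Implicit Types (M : 'M[R]_n) (x y d q : 'cV[R]_n).

Lemma dotv_ge0 x y : nonnegv x -> nonnegv y -> 0 <= dotv x y.
Proof. by move=> hx hy; apply: sumr_ge0 => i _; apply: mulr_ge0. Qed.

Lemma dotv_delta i y : dotv (delta_mx i 0) y = y i 0.
Proof.
rewrite /dotv (bigD1 i) //= big1 => [|j /negbTE ji]; first by rewrite mxE !eqxx mul1r addr0.
by rewrite mxE ji mul0r.
Qed.

Lemma nonnegv_delta i : nonnegv (delta_mx i 0 : 'cV[R]_n).
Proof. by move=> j; rewrite mxE; case: (_ && _). Qed.

(* the interior of the nonnegative orthant is the open orthant; for the
   reverse inclusion the radius is the least coordinate of d *)
Lemma interiorv_orthant (S : 'cV[R]_n -> Prop) :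
  (forall y, S y <-> nonnegv y) -> forall d, interiorv S d <-> forall i, 0 < d i 0.
Proof.
move=> hS d; split.
- case=> eps eps_gt0 hball i.
  have /hS hz : S (d - (eps / 2) *: const_mx 1).
    apply: hball => j; rewrite !mxE mulr1 addrAC subrr add0r normrN ger0_norm; lra.
  by have := hz i; rewrite !mxE mulr1; lra.
- move=> dpos; exists (\big[Num.min/1]_i d i 0).
    apply: (big_ind (fun r => 0 < r)) => [|r1 r2 h1 h2|i _] //; by rewrite ?lt_min ?h1 ?h2 ?dpos.
  move=> z hz; apply/hS => i; have := hz i; have : \big[Num.min/1]_j d j 0 <= d i 0 by exact: bigmin_le.
  by rewrite ltr_norml; lra.
Qed.

Definition full_range M : Prop := forall x, exists z, x = M *m z.

Section FullRange.
Variable M : 'M[R]_n.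
Hypothesis onto : full_range M.

Lemma KM_full_range x : KM M x <-> nonnegv x.
Proof. by split=> [[]|hx] //; split. Qed.

(* ... and so is its dual cone, tested against the unit vectors *)
Lemma KMdual_full_range y : KMdual M y <-> nonnegv y.
Proof.
split=> [hy i|hy x /KM_full_range hx]; last exact: dotv_ge0.
by rewrite -dotv_delta; apply/hy/KM_full_range/nonnegv_delta.
Qed.

Lemma LCP_sol_full_range q x :
  LCP_sol M q x <-> [/\ nonnegv x, nonnegv (M *m x + q) & dotv x (M *m x + q) = 0].
Proof.
rewrite /LCP_sol KM_full_range KMdual_full_range.
by split=> [[? [? ?]]|[? ? ?]].
Qed.

End FullRange.

Definition orthant_lcp_trivial M q : Prop :=
  forall x, nonnegv x -> nonnegv (M *m x + q) -> dotv x (M *m x + q) = 0 -> x = 0.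

Lemma karamardian_full_range M : (0 < n)%N -> full_range M ->
  karamardian M <->
  exists d, [/\ forall i, 0 < d i 0, orthant_lcp_trivial M 0 & orthant_lcp_trivial M d].
Proof.
move=> n_gt0 onto.
have triv q : (forall x, LCP_sol M q x -> x = 0) <-> orthant_lcp_trivial M q.
  split=> [h x hx hw hc|h x /(LCP_sol_full_range onto) [hx hw hc]]; last exact: h.
  by apply: h; apply/(LCP_sol_full_range onto).
have int d : interiorv (KMdual M) d <-> forall i, 0 < d i 0.
  exact/interiorv_orthant/(KMdual_full_range onto).
split=> [[_ [d [/int dpos [/triv h0 /triv hd]]]]|[d [dpos h0 hd]]].
  by exists d.
split; last by exists d; rewrite int !triv.
pose i0 : 'I_n := Ordinal n_gt0.
exists (delta_mx i0 0); split; first exact/(KM_full_range onto)/nonnegv_delta.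
by move/matrixP/(_ i0 0); rewrite !mxE !eqxx => /eqP; rewrite oner_eq0.
Qed.
End Orthant.

Section Coordinates2.
Variable R : realType.
Implicit Types (a b c e t s u v : R) (x : 'cV[R]_2).

Definition col2 t s : 'cV[R]_2 := \col_(i < 2) (if (i : nat) == 0%N then t else s).

Lemma ord2P (i : 'I_2) : i = 0 \/ i = 1.
Proof. by case: i => [[|[|k]] hi] //; [left|right]; apply/val_inj. Qed.

Lemma forall_ord2 (P : 'I_2 -> Prop) : (forall i, P i) <-> P 0 /\ P 1.
Proof. by split=> [h|[h0 h1] i]; [split|case: (ord2P i) => ->]. Qed.

Lemma col2E0 t s : col2 t s 0 0 = t. Proof. by rewrite mxE. Qed.
Lemma col2E1 t s : col2 t s 1 0 = s. Proof. by rewrite mxE. Qed.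

Lemma col2_eta x : x = col2 (x 0 0) (x 1 0).
Proof. by apply/matrixP => i j; rewrite ord1; case: (ord2P i) => ->; rewrite mxE. Qed.

Lemma col2_eq0 t s : col2 t s = 0 <-> t = 0 /\ s = 0.
Proof.
split=> [h|[-> ->]].
  by have := congr1 (fun x => (x 0 0, x 1 0)) h; rewrite /= col2E0 col2E1 !mxE => -[].
by apply/matrixP => i j; rewrite !mxE; case: ifP.
Qed.

Lemma forall_col2 (P : 'cV[R]_2 -> Prop) : (forall x, P x) <-> (forall t s, P (col2 t s)).
Proof. by split=> h // x; rewrite (col2_eta x). Qed.

Lemma col2_add t s u v : col2 t s + col2 u v = col2 (t + u) (s + v).
Proof. by apply/matrixP => i j; rewrite !mxE; case: ifP. Qed.

Lemma col2_00 : col2 0 0 = 0.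
Proof. exact/col2_eq0. Qed.

Lemma mx2_mul a b c e t s :
  mx2 a b c e *m col2 t s = col2 (a * t + b * s) (c * t + e * s).
Proof.
apply/matrixP => i j; rewrite ord1 !mxE big_ord_recl big_ord1 !mxE /=.
by case: (ord2P i) => ->.
Qed.

Lemma dotv_col2 t s u v : dotv (col2 t s) (col2 u v) = t * u + s * v.
Proof. by rewrite /dotv big_ord_recl big_ord1 !mxE. Qed.

Lemma nonnegv_col2 t s : nonnegv (col2 t s) <-> 0 <= t /\ 0 <= s.
Proof. by rewrite /nonnegv forall_ord2 col2E0 col2E1. Qed.

Lemma mx2_full_range a b c e : a * e - b * c != 0 -> full_range (mx2 a b c e).
Proof.
move=> hdet; apply/forall_col2 => t s.
exists (col2 ((e * t - b * s) / (a * e - b * c)) ((a * s - c * t) / (a * e - b * c))).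
by rewrite mx2_mul; congr col2; field.
Qed.
End Coordinates2.

Section LCP2.
Variable R : realType.
Implicit Types (a b c e t s u v : R).

Definition lcp2_trivial a b c e u v : Prop :=
  forall t s, 0 <= t -> 0 <= s ->
    0 <= a * t + b * s + u -> 0 <= c * t + e * s + v ->
    t * (a * t + b * s + u) + s * (c * t + e * s + v) = 0 -> t = 0 /\ s = 0.

Lemma orthant_lcp_trivial_mx2 a b c e u v :
  orthant_lcp_trivial (mx2 a b c e) (col2 u v) <-> lcp2_trivial a b c e u v.
Proof.
rewrite /orthant_lcp_trivial forall_col2.
split=> h t s; have := h t s;
  rewrite mx2_mul col2_add !nonnegv_col2 dotv_col2 col2_eq0; last by move=> H [? ?] [? ?]; apply: H.
by move=> H ht hs hw1 hw2; apply: H.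
Qed.

Definition karamardian2 a b c e : Prop :=
  exists d1 d2, [/\ 0 < d1, 0 < d2, lcp2_trivial a b c e 0 0 & lcp2_trivial a b c e d1 d2].

Lemma karamardian_mx2 a b c e : a * e - b * c != 0 ->
  karamardian (mx2 a b c e) <-> karamardian2 a b c e.
Proof.
move=> hdet; rewrite karamardian_full_range //; last exact: mx2_full_range.
have pos d1 d2 : (forall i, 0 < col2 d1 d2 i 0) <-> 0 < d1 /\ 0 < d2.
  by rewrite forall_ord2 col2E0 col2E1.
have triv0 : orthant_lcp_trivial (mx2 a b c e) 0 <-> lcp2_trivial a b c e 0 0.
  by rewrite -col2_00 orthant_lcp_trivial_mx2.
split=> [[d [dpos /triv0 h0 hd]]|[d1 [d2 [d1_gt0 d2_gt0 h0 hd]]]].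
- move: dpos hd; rewrite (col2_eta d) pos orthant_lcp_trivial_mx2 => -[? ?] ?.
  by exists (d 0 0), (d 1 0).
- by exists (col2 d1 d2); split; [exact/pos | exact/triv0 | exact/orthant_lcp_trivial_mx2].
Qed.

Lemma lcp2_trivial_swap beta gamma delta u v :
  lcp2_trivial delta gamma beta 0 u v <-> lcp2_trivial 0 beta gamma delta v u.
Proof.
by split=> h t s ht hs hw1 hw2 hc; have [? ?] := h s t hs ht ltac:(lra) ltac:(lra) ltac:(lra).
Qed.

Lemma karamardian2_swap beta gamma delta :
  karamardian2 delta gamma beta 0 <-> karamardian2 0 beta gamma delta.
Proof.
by split=> -[d1 [d2 [? ? h0 hd]]]; exists d2, d1; split=> //; exact/lcp2_trivial_swap.
Qed.

Lemma complementarity2 t s w1 w2 : 0 <= t -> 0 <= s -> 0 <= w1 -> 0 <= w2 ->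
  t * w1 + s * w2 = 0 -> t * w1 = 0 /\ s * w2 = 0.
Proof.
move=> ht hs hw1 hw2 /eqP; rewrite paddr_eq0 ?mulr_ge0 //.
by case/andP=> /eqP ? /eqP.
Qed.

Lemma lcp2_trivial_zero beta gamma delta : gamma < 0 -> 0 < beta -> 0 < delta ->
  lcp2_trivial 0 beta gamma delta 0 0.
Proof.
move=> gamma_lt0 beta_gt0 delta_gt0 t s ht hs hw1 hw2.
case/(complementarity2 ht hs hw1 hw2); rewrite mul0r add0r !addr0 in hw2 * => c1 c2.
have ts0 : t * s = 0.
  by apply/eqP; move/eqP: c1; rewrite mulrCA mulf_eq0 (gt_eqF beta_gt0).
have s0 : s = 0.
  have ss : delta * (s * s) = s * (gamma * t + delta * s) - gamma * (t * s) by ring.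
  by move/eqP: ss; rewrite c2 ts0 mulr0 subr0 !mulf_eq0 (gt_eqF delta_gt0) orbb => /eqP.
by split=> //; move: hw2; rewrite s0 mulr0 addr0; nra.
Qed.

Lemma lcp2_trivial_pos beta gamma delta d1 d2 : gamma < 0 -> 0 < beta -> 0 < delta ->
  0 < d1 -> 0 < d2 -> lcp2_trivial 0 beta gamma delta d1 d2.
Proof.
move=> gamma_lt0 beta_gt0 delta_gt0 d1_gt0 d2_gt0 t s ht hs hw1 hw2.
case/(complementarity2 ht hs hw1 hw2); rewrite mul0r add0r => c1 c2.
have t0 : t = 0 by move/eqP: c1; rewrite mulf_eq0 => /predU1P[//|/eqP]; nra.
split=> //; move/eqP: c2; rewrite t0 mulr0 add0r mulf_eq0 => /predU1P[//|/eqP]; nra.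
Qed.

Lemma lcp2_nontrivial a b c e u v t s : 0 <= t -> 0 < s ->
  0 <= a * t + b * s + u -> c * t + e * s + v = 0 -> t * (a * t + b * s + u) = 0 ->
  ~ lcp2_trivial a b c e u v.
Proof.
move=> ht s_gt0 hw1 hw2 hc h.
have hw2' : 0 <= c * t + e * s + v by rewrite hw2.
have hc' : t * (a * t + b * s + u) + s * (c * t + e * s + v) = 0.
  by rewrite hc hw2 mulr0 addr0.
have [_ s0] := h t s ht (ltW s_gt0) hw1 hw2' hc'.
by move: s_gt0; rewrite s0 ltxx.
Qed.

(* if e < 0 and v > 0, the ray t = 0 carries the solution s = v / (-e) *)
Lemma lcp2_face a b c e u v : e < 0 -> 0 < v -> 0 <= b * (v / - e) + u ->
  ~ lcp2_trivial a b c e u v.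
Proof.
move=> e_lt0 v_gt0 hw1; apply: (lcp2_nontrivial (t := 0) (s := v / - e)).
- exact: lexx.
- by rewrite divr_gt0 // oppr_gt0.
- by rewrite mulr0 add0r.
- by rewrite mulr0 add0r; field; rewrite lt_eqF.
- by rewrite mul0r.
Qed.

(* necessity: the homogeneous LCP forces gamma < 0 (else (1, 0) solves it) *)
Lemma gamma_neg beta gamma delta : gamma != 0 ->
  lcp2_trivial 0 beta gamma delta 0 0 -> gamma < 0.
Proof.
move=> gamma_neq0 h; rewrite lt_neqAle gamma_neq0 /= leNgt; apply/negP => gamma_gt0.
have [] := h 1 0 ler01 (lexx 0); rewrite ?(mulr0, mul0r, mulr1, mul1r, addr0) ?lexx ?ltW //.
by move/eqP; rewrite oner_eq0.
Qed.

Lemma beta_pos beta gamma delta d1 d2 : beta != 0 -> gamma < 0 -> 0 < d1 -> 0 < d2 ->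
  lcp2_trivial 0 beta gamma delta d1 d2 -> 0 < beta.
Proof.
move=> beta_neq0 gamma_lt0 d1_gt0 d2_gt0 h.
rewrite lt_neqAle eq_sym beta_neq0 /= leNgt; apply/negP => beta_lt0.
pose s1 := d1 / - beta.
have s1_gt0 : 0 < s1 by rewrite divr_gt0 // oppr_gt0.
have w1_0 : beta * s1 + d1 = 0 by rewrite /s1; field.
have [w2_ge0|w2_lt0] := lerP 0 (delta * s1 + d2).
  (* both slacks vanish at (t1, s1), where t1 = (delta s1 + d2) / (-gamma) >= 0 *)
  pose t1 := (delta * s1 + d2) / - gamma.
  apply: (lcp2_nontrivial (t := t1) _ s1_gt0 _ _ _ h).
  - by rewrite divr_ge0 // oppr_ge0 ltW.
  - by rewrite mul0r add0r w1_0.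
  - by rewrite /t1; field; rewrite lt_eqF.
  - by rewrite mul0r add0r w1_0 mulr0.
(* otherwise delta < 0 and the face solution s0 = d2 / (-delta) < s1 works *)
have delta_lt0 : delta < 0 by nra.
apply: (lcp2_face delta_lt0 d2_gt0 _ h).
have s0_lt_s1 : d2 / - delta < s1.
  have delta_s0 : delta * (d2 / - delta) = - d2 by field; rewrite lt_eqF.
  by rewrite -(ltr_nM2l delta_lt0) delta_s0; lra.
nra.
Qed.

Lemma delta_pos beta gamma delta d1 d2 : delta != 0 -> 0 < beta -> 0 < d1 -> 0 < d2 ->
  lcp2_trivial 0 beta gamma delta d1 d2 -> 0 < delta.
Proof.
move=> delta_neq0 beta_gt0 d1_gt0 d2_gt0 h.
rewrite lt_neqAle eq_sym delta_neq0 /= leNgt; apply/negP => delta_lt0.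
apply: (lcp2_face delta_lt0 d2_gt0 _ h).
by rewrite addr_ge0 ?ltW // mulr_gt0 // divr_gt0 // oppr_gt0.
Qed.

Lemma karamardian2_criterion beta gamma delta :
  beta != 0 -> gamma != 0 -> delta != 0 ->
  karamardian2 0 beta gamma delta <-> (gamma < 0 /\ 0 < beta /\ 0 < delta).
Proof.
move=> beta_neq0 gamma_neq0 delta_neq0; split.
  case=> d1 [d2 [d1_gt0 d2_gt0 h0 hd]].
  have gamma_lt0 := gamma_neg gamma_neq0 h0.
  have beta_gt0 := beta_pos beta_neq0 gamma_lt0 d1_gt0 d2_gt0 hd.
  by do 2?split=> //; exact: delta_pos delta_neq0 beta_gt0 d1_gt0 d2_gt0 hd.
case=> gamma_lt0 [beta_gt0 delta_gt0]; exists 1, 1; split; rewrite ?ltr01 //.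
  exact: lcp2_trivial_zero.
exact: lcp2_trivial_pos.
Qed.
End LCP2.

Theorem mainTheorem20 (R : realType) (beta gamma delta : R)
  (hb : beta != 0) (hg : gamma != 0) (hd : delta != 0) (A : 'M[R]_2)
  (hA : A = mx2 0 beta gamma delta \/ A = mx2 delta gamma beta 0) :
  karamardian A <-> (gamma < 0 /\ 0 < beta /\ 0 < delta).
Proof.
rewrite -(karamardian2_criterion hb hg hd).
have det_neq0 : beta * gamma != 0 by rewrite mulf_neq0.
case: hA => ->.
  by rewrite karamardian_mx2 // mul0r sub0r oppr_eq0.
by rewrite karamardian_mx2 ?karamardian2_swap // mulr0 sub0r oppr_eq0 mulrC.
Qed.
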